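(* Let $n\ge2$, $t_1<\dots<t_n$, and for $j=1,\dots,n-1$ let $\lambda_{0,j}\le\lambda_{1,j}$ be real. For $f\in C^2[t_1,t_n]$ let $I_2(f)$ be the continuous function on $[t_1,t_n]$ whose restriction to each $[t_j,t_{j+1}]$ lies in $E(\lambda_{0,j},\lambda_{1,j})$ and which satisfies $I_2(f)(t_j)=f(t_j)$ for $j=1,\dots,n$. Then $$\|f-I_2(f)\|_{[t_1,t_n]}\le\max_{1\le j\le n-1}M^{t_j,t_{j+1}}_{\lambda_{0,j},\lambda_{1,j}}\cdot\max_{1\le j\le n-1}\max_{\theta\in[t_j,t_{j+1}]}\left|L_{(\lambda_{0,j},\lambda_{1,j})}f(\theta)\right|.$$
   Context: $\|g\|_{[a,b]}=\max_{t\in[a,b]}|g(t)|$. For real $\lambda_0,\dots,\lambda_N$, $L_{(\lambda_0,\dots,\lambda_N)}=\prod_{j=0}^N(\frac{d}{dt}-\lambda_j)$ and $E(\lambda_0,\dots,\lambda_N)=\{f\in C^{N+1}(\mathbb{R}):L_{(\lambda_0,\dots,\lambda_N)}f=0\}$. For real $\mu_0,\mu_1$ and $a<b$, $\Omega^{a,b}_{\mu_0,\mu_1,0}$ denotes the unique $u\in E(\mu_0,\mu_1,0)$ with $u(a)=u(b)=0$ and $L_{(\mu_0,\mu_1)}u\equiv-1$, and $M^{a,b}_{\mu_0,\mu_1}:=\max_{t\in[a,b]}|\Omega^{a,b}_{\mu_0,\mu_1,0}(t)|$. *)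

From Stdlib Require Import Reals Lra List.
From Coquelicot Require Import Coquelicot.
Open Scope R_scope.

Fixpoint Lop (ls : list R) (f : R -> R) : R -> R :=
  match ls with
  | nil => f
  | l :: ls' => fun x => Derive (Lop ls' f) x - l * Lop ls' f x
  end.

Definition CkR (m : nat) (f : R -> R) : Prop :=
  (forall (k : nat) (x : R), (k < m)%nat -> ex_derive (Derive_n f k) x) /\
  (forall x, continuous (Derive_n f m) x).

Definition inE (ls : list R) (f : R -> R) : Prop :=
  CkR (length ls) f /\ forall x, Lop ls f x = 0.

Definition Omega_spec (a b m0 m1 : R) (u : R -> R) : Prop :=
  inE (m0 :: m1 :: 0 :: nil) u /\ u a = 0 /\ u b = 0 /\
  (forall x, Lop (m0 :: m1 :: nil) u x = -1).

Definition sup_on (a b : R) (F : R -> R) : R :=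
  real (Lub_Rbar (fun y => exists t, a <= t <= b /\ y = F t)).

(* M^{a,b}_{m0,m1} = max_{t in [a,b]} |Omega^{a,b}_{m0,m1,0}(t)| *)
Definition Mconst (a b m0 m1 : R) : R :=
  real (Lub_Rbar (fun y => exists u, Omega_spec a b m0 m1 u /\
                     exists t, a <= t <= b /\ y = Rabs (u t))).

Definition maxj (n : nat) (F : nat -> R) : R :=
  fold_right Rmax (F 1%nat) (map F (seq 1 (n - 1))).

Definition deriv_on (a b : R) (g dg : R -> R) : Prop :=
  forall x, a <= x <= b -> forall eps, 0 < eps -> exists delta, 0 < delta /\
    forall y, a <= y <= b -> 0 < Rabs (y - x) < delta ->
      Rabs ((g y - g x) / (y - x) - dg x) < eps.

Definition cont_on (a b : R) (g : R -> R) : Prop :=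
  forall x, a <= x <= b -> forall eps, 0 < eps -> exists delta, 0 < delta /\
    forall y, a <= y <= b -> Rabs (y - x) < delta -> Rabs (g y - g x) < eps.

(* On each interval [a,b] = [t_j, t_{j+1}] the interpolant h lies in
   E(mu,nu) and agrees with f at a and b, so w = f - h vanishes at both
   end points and satisfies L w = L f, where L = (D - mu)(D - nu).  The key
   tool is a maximum principle for L with real mu, nu: if w(a) = w(b) = 0
   and L w <= 0 on (a,b) then w >= 0 on [a,b].  It is proved by
   factoring L: V = e^{-nu x} w has a negative interior value, hence by the
   mean value theorem a decreasing and then an increasing point, while
   phi = e^{(nu-mu) x} V' is nonincreasing (phi' = e^{-mu x} L w).
   Applied to K Omega -+ w, where Omega is the solution of L Omega = -1
   vanishing at a and b and K bounds |L w|, it gives |w| <= K Omega.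
   With K = 0 this yields the uniqueness of Omega, so M^{a,b} is the
   maximum of |Omega|; with K = max |L f| it yields the local estimate.
   Existence of Omega is shown by an explicit formula. *)

From Stdlib Require Import Reals Lra Lia List.
From Coquelicot Require Import Coquelicot.
Open Scope R_scope.

(* Differentiation rules with the operations of R written explicitly, so
   that they apply to goals by first-order unification. *)
Lemma derive_plus f g x df dg : is_derive f x df -> is_derive g x dg ->
  is_derive (fun y => f y + g y) x (df + dg).
Proof. intros; apply (is_derive_plus f g x df dg); auto. Qed.

Lemma derive_minus f g x df dg : is_derive f x df -> is_derive g x dg ->
  is_derive (fun y => f y - g y) x (df - dg).
Proof. intros; apply (is_derive_minus f g x df dg); auto. Qed.

Lemma derive_mult f g x df dg : is_derive f x df -> is_derive g x dg ->
  is_derive (fun y => f y * g y) x (df * g x + f x * dg).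
Proof. intros; apply (is_derive_mult f g x df dg); auto. intros; apply Rmult_comm. Qed.

Lemma derive_exp_lin (c x : R) : is_derive (fun y => exp (c * y)) x (c * exp (c * x)).
Proof. auto_derive; [auto | ring]. Qed.

Lemma derive_const (c x : R) : is_derive (fun _ => c) x 0.
Proof. apply (is_derive_const c x). Qed.

Lemma derive_id (x : R) : is_derive (fun y => y) x 1.
Proof. apply (is_derive_id x). Qed.

Lemma derive_value_eq (f : R -> R) (x l l' : R) : is_derive f x l -> l = l' -> is_derive f x l'.
Proof. intros H <-; exact H. Qed.

Lemma derive_cont (f : R -> R) x l : is_derive f x l -> continuity_pt f x.
Proof. intros H. apply derivable_continuous_pt. exists l. apply is_derive_Reals; auto. Qed.

(* The projection of R onto [a,b]; composing with it turns a function
   continuous on [a,b] into one continuous on all of R. *)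
Definition clamp (a b x : R) : R := Rmax a (Rmin b x).

Lemma clamp_in a b x : a <= b -> a <= clamp a b x <= b.
Proof. intros; unfold clamp, Rmax, Rmin; repeat destruct Rle_dec; lra. Qed.

Lemma clamp_id a b x : a <= x <= b -> clamp a b x = x.
Proof. intros; unfold clamp, Rmax, Rmin; repeat destruct Rle_dec; lra. Qed.

Lemma clamp_lipschitz a b x y : a <= b -> Rabs (clamp a b y - clamp a b x) <= Rabs (y - x).
Proof.
  intros; unfold clamp, Rmax, Rmin; repeat destruct Rle_dec;
    unfold Rabs; repeat destruct Rcase_abs; lra.
Qed.

Lemma clamp_locally_id a b x : a < x < b -> locally x (fun y => clamp a b y = y).
Proof.
  intros Hx. assert (Hr : 0 < Rmin (x - a) (b - x)) by (apply Rmin_pos; lra).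
  exists (mkposreal _ Hr). intros y Hy. apply clamp_id.
  change (Rabs (y - x) < Rmin (x - a) (b - x)) in Hy.
  pose proof (Rmin_l (x - a) (b - x)); pose proof (Rmin_r (x - a) (b - x)).
  apply Rabs_def2 in Hy; lra.
Qed.

Lemma cont_on_clamp a b g : a <= b ->
  (cont_on a b g <-> forall x, continuity_pt (fun y => g (clamp a b y)) x).
Proof.
  intros Hab; split.
  - intros Hc x eps Heps.
    destruct (Hc (clamp a b x) (clamp_in a b x Hab) eps Heps) as [d [Hd Hy]].
    exists d; split; auto. intros y [_ Hyx]. apply Hy; [apply clamp_in; auto |].
    eapply Rle_lt_trans; [apply clamp_lipschitz; auto | exact Hyx].
  - intros Hc x Hx eps Heps. destruct (Hc x eps Heps) as [d [Hd Hy]].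
    exists d; split; auto. intros y Hyab Hyx.
    destruct (Req_dec y x) as [-> | Hne]; [rewrite Rminus_eq_0, Rabs_R0; auto |].
    specialize (Hy y (conj (conj I (not_eq_sym Hne)) Hyx)).
    unfold R_dist in Hy. rewrite !clamp_id in Hy; auto.
Qed.

Lemma cont_on_of_continuity_pt a b g :
  (forall x, a <= x <= b -> continuity_pt g x) -> cont_on a b g.
Proof.
  intros Hc x Hx eps Heps. destruct (Hc x Hx eps Heps) as [d [Hd Hy]].
  exists d; split; auto. intros y _ Hyx.
  destruct (Req_dec y x) as [-> | Hne]; [rewrite Rminus_eq_0, Rabs_R0; auto |].
  exact (Hy y (conj (conj I (not_eq_sym Hne)) Hyx)).
Qed.

Lemma cont_on_sub a b c d g : a <= c -> d <= b -> cont_on a b g -> cont_on c d g.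
Proof.
  intros Hac Hdb H x Hx eps Heps. destruct (H x ltac:(lra) eps Heps) as [de [Hde Hy]].
  exists de; split; auto. intros y Hy1 Hy2; apply Hy; auto; lra.
Qed.

Lemma cont_on_lift1 (op : R -> R) a b g : a <= b ->
  (forall u x, continuity_pt u x -> continuity_pt (fun y => op (u y)) x) ->
  cont_on a b g -> cont_on a b (fun y => op (g y)).
Proof.
  intros Hab Hop Hg. apply (proj2 (cont_on_clamp a b _ Hab)). intros x.
  apply (Hop (fun y => g (clamp a b y))). now apply cont_on_clamp.
Qed.

Lemma cont_on_lift2 (op : R -> R -> R) a b g1 g2 : a <= b ->
  (forall u v x, continuity_pt u x -> continuity_pt v x ->
     continuity_pt (fun y => op (u y) (v y)) x) ->
  cont_on a b g1 -> cont_on a b g2 -> cont_on a b (fun y => op (g1 y) (g2 y)).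
Proof.
  intros Hab Hop Hg1 Hg2. apply (proj2 (cont_on_clamp a b _ Hab)). intros x.
  apply (Hop (fun y => g1 (clamp a b y)) (fun y => g2 (clamp a b y)));
    now apply cont_on_clamp.
Qed.

Lemma cont_on_scal a b k g : a <= b -> cont_on a b g -> cont_on a b (fun y => k * g y).
Proof. intros Hab; apply (cont_on_lift1 (Rmult k)); auto. intros u x Hu; now apply (continuity_pt_scal u). Qed.

Lemma cont_on_abs a b g : a <= b -> cont_on a b g -> cont_on a b (fun y => Rabs (g y)).
Proof.
  intros Hab; apply (cont_on_lift1 Rabs); auto.
  intros u x Hu; apply (continuity_pt_comp u Rabs); auto; apply Rcontinuity_abs.
Qed.

Lemma cont_on_plus a b g1 g2 : a <= b -> cont_on a b g1 -> cont_on a b g2 ->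
  cont_on a b (fun y => g1 y + g2 y).
Proof. intros Hab; apply (cont_on_lift2 Rplus); auto. intros u v x; apply (continuity_pt_plus u v). Qed.

Lemma cont_on_minus a b g1 g2 : a <= b -> cont_on a b g1 -> cont_on a b g2 ->
  cont_on a b (fun y => g1 y - g2 y).
Proof. intros Hab; apply (cont_on_lift2 Rminus); auto. intros u v x; apply (continuity_pt_minus u v). Qed.

Lemma cont_on_mult a b g1 g2 : a <= b -> cont_on a b g1 -> cont_on a b g2 ->
  cont_on a b (fun y => g1 y * g2 y).
Proof. intros Hab; apply (cont_on_lift2 Rmult); auto. intros u v x; apply (continuity_pt_mult u v). Qed.

Lemma deriv_on_cont a b g dg : deriv_on a b g dg -> cont_on a b g.
Proof.
  intros H x Hx eps Heps. destruct (H x Hx 1 Rlt_0_1) as [d [Hd Hy]].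
  set (k := Rabs (dg x) + 1).
  assert (Hk : 0 < k) by (unfold k; pose proof (Rabs_pos (dg x)); lra).
  exists (Rmin d (eps / k)). split; [apply Rmin_pos; auto; apply Rdiv_lt_0_compat; auto |].
  intros y Hyab Hyx. destruct (Req_dec y x) as [-> | Hne]; [rewrite Rminus_eq_0, Rabs_R0; auto |].
  assert (H0 : 0 < Rabs (y - x)) by (apply Rabs_pos_lt; lra).
  assert (Hq := Hy y Hyab (conj H0 (Rlt_le_trans _ _ _ Hyx (Rmin_l _ _)))).
  set (q := (g y - g x) / (y - x)) in Hq.
  assert (Hslope : Rabs q <= k).
  { unfold k. replace q with ((q - dg x) + dg x) by ring.
    eapply Rle_trans; [apply Rabs_triang | lra]. }
  assert (Hclose : Rabs (y - x) < eps / k) by (eapply Rlt_le_trans; [apply Hyx | apply Rmin_r]).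
  replace (g y - g x) with (q * (y - x)) by (unfold q; field; lra).
  rewrite Rabs_mult. apply Rle_lt_trans with (k * Rabs (y - x)).
  - apply Rmult_le_compat_r; auto. apply Rabs_pos.
  - apply (Rmult_lt_compat_l k) in Hclose; auto.
    replace (k * (eps / k)) with eps in Hclose by (field; lra). exact Hclose.
Qed.

Lemma deriv_on_is_derive a b g dg x : deriv_on a b g dg -> a < x < b -> is_derive g x (dg x).
Proof.
  intros H Hx. apply is_derive_Reals. intros eps Heps.
  destruct (H x ltac:(lra) eps Heps) as [d [Hd Hy]].
  assert (Hp : 0 < Rmin d (Rmin (x - a) (b - x))) by (repeat apply Rmin_pos; lra).
  exists (mkposreal _ Hp). intros e He Hed. simpl in Hed.
  pose proof (Rmin_l d (Rmin (x - a) (b - x))); pose proof (Rmin_r d (Rmin (x - a) (b - x))).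
  pose proof (Rmin_l (x - a) (b - x)); pose proof (Rmin_r (x - a) (b - x)).
  assert (Hed' := Hed). apply Rabs_def2 in Hed'.
  specialize (Hy (x + e)). replace (x + e - x) with e in Hy by ring.
  apply Hy; [lra | split; [apply Rabs_pos_lt; auto | lra]].
Qed.

Lemma deriv_on_sub a b c d g dg : a <= c -> d <= b -> deriv_on a b g dg -> deriv_on c d g dg.
Proof.
  intros Hac Hdb H x Hx eps Heps. destruct (H x ltac:(lra) eps Heps) as [de [Hde Hy]].
  exists de; split; auto. intros y Hy1 Hy2; apply Hy; auto; lra.
Qed.

Definition C2_on (a b : R) (f f1 f2 : R -> R) : Prop :=
  deriv_on a b f f1 /\ deriv_on a b f1 f2 /\ cont_on a b f2.

Lemma C2_on_sub a b c d f f1 f2 : a <= c -> d <= b -> C2_on a b f f1 f2 -> C2_on c d f f1 f2.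
Proof.
  intros Hac Hdb [H0 [H1 H2]].
  split; [| split]; [eapply deriv_on_sub | eapply deriv_on_sub | eapply cont_on_sub]; eauto.
Qed.

Definition Lexpr (mu nu : R) (u u1 u2 : R -> R) (x : R) : R :=
  u2 x - (mu + nu) * u1 x + mu * nu * u x.

Lemma Lexpr_cont_on a b mu nu f f1 f2 : a <= b -> C2_on a b f f1 f2 ->
  cont_on a b (fun x => Rabs (Lexpr mu nu f f1 f2 x)).
Proof.
  intros Hab [Hf [Hf1 Hf2]]. apply cont_on_abs; auto. unfold Lexpr.
  apply cont_on_plus; [auto | apply cont_on_minus | apply cont_on_scal];
    try apply cont_on_scal; eauto using deriv_on_cont.
Qed.

Lemma mvt_on (f df : R -> R) a b : a < b -> (forall x, a < x < b -> is_derive f x (df x)) ->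
  cont_on a b f -> exists c, a < c < b /\ f b - f a = df c * (b - a).
Proof.
  intros Hab Hd Hc.
  set (fc := fun y => f (clamp a b y)).
  assert (Hdc : forall c, a < c < b -> is_derive fc c (df c)).
  { intros c Hcab. apply is_derive_ext_loc with f; [| auto].
    apply filter_imp with (fun y => clamp a b y = y); [| now apply clamp_locally_id].
    intros y Hy; unfold fc; now rewrite Hy. }
  set (pr := fun c (P : a < c < b) =>
    exist (fun l => derivable_pt_abs fc c l) (df c) (proj1 (is_derive_Reals _ _ _) (Hdc c P))).
  destruct (MVT fc id a b pr (fun c _ => derivable_pt_id c) Hab)
    as [c [P E]]; [intros; apply cont_on_clamp; lra || apply Hc |
                   intros; apply derivable_continuous_pt, derivable_pt_id |].
  exists c; split; auto. rewrite derive_pt_id in E. simpl in E. unfold id, fc in E.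
  rewrite !clamp_id in E by lra. lra.
Qed.

Lemma sign_change (V V1 : R -> R) a b x0 : a < x0 < b -> cont_on a b V ->
  (forall x, a < x < b -> is_derive V x (V1 x)) -> V a = 0 -> V b = 0 -> V x0 < 0 ->
  exists c1 c2, a < c1 < c2 /\ c2 < b /\ V1 c1 < 0 /\ 0 < V1 c2.
Proof.
  intros Hx0 Hc Hd Ha Hb Hneg.
  destruct (mvt_on V V1 a x0) as [c1 [Hc1 E1]];
    [lra | intros; apply Hd; lra | eapply cont_on_sub; [| | exact Hc]; lra |].
  destruct (mvt_on V V1 x0 b) as [c2 [Hc2 E2]];
    [lra | intros; apply Hd; lra | eapply cont_on_sub; [| | exact Hc]; lra |].
  exists c1, c2. repeat split; try lra; nra.
Qed.

Lemma max_principle a b mu nu (w w1 w2 : R -> R) : a < b -> cont_on a b w -> w a = 0 -> w b = 0 ->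
  (forall x, a < x < b -> is_derive w x (w1 x)) ->
  (forall x, a < x < b -> is_derive w1 x (w2 x)) ->
  (forall x, a < x < b -> Lexpr mu nu w w1 w2 x <= 0) ->
  forall x, a <= x <= b -> 0 <= w x.
Proof.
  intros Hab Hc Ha Hb Hw Hw1 HL x0 Hx0.
  destruct (Rle_dec 0 (w x0)) as [| Hneg]; [auto | exfalso].
  assert (Hx : a < x0 < b).
  { assert (x0 <> a) by (intros ->; lra). assert (x0 <> b) by (intros ->; lra). lra. }
  set (V := fun y => exp (- nu * y) * w y).
  assert (HV : forall y, a < y < b -> is_derive V y (exp (- nu * y) * (w1 y - nu * w y))).
  { intros y Hy. eapply derive_value_eq; [apply derive_mult; [apply derive_exp_lin | apply Hw; auto] |].
    cbv beta; ring. }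
  assert (HVc : cont_on a b V).
  { apply cont_on_mult; [lra | | exact Hc].
    apply cont_on_of_continuity_pt; intros; eapply derive_cont, derive_exp_lin. }
  destruct (sign_change V _ a b x0 Hx HVc HV) as [c1 [c2 [Hc12 [Hc2 [H1 H2]]]]];
    unfold V; [rewrite Ha; ring | rewrite Hb; ring | pose proof (exp_pos (- nu * x0)); nra |].
  (* phi = e^{(nu-mu) x} V' is nonincreasing since phi' = e^{-mu x} L w *)
  set (phi := fun y => exp (- mu * y) * (w1 y - nu * w y)).
  assert (Hphi : forall y, a < y < b -> is_derive phi y (exp (- mu * y) * Lexpr mu nu w w1 w2 y)).
  { intros y Hy. eapply derive_value_eq.
    - apply derive_mult; [apply derive_exp_lin |].
      apply derive_minus; [apply Hw1; auto | apply is_derive_scal, Hw; auto].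
    - unfold Lexpr; ring. }
  destruct (mvt_on phi (fun y => exp (- mu * y) * Lexpr mu nu w w1 w2 y) c1 c2) as [c [Hcc E]];
    [lra | intros; apply Hphi; lra |
     apply cont_on_of_continuity_pt; intros; eapply derive_cont, Hphi; lra |].
  assert (S1 : w1 c1 - nu * w c1 < 0) by (pose proof (exp_pos (- nu * c1)); nra).
  assert (S2 : 0 < w1 c2 - nu * w c2) by (pose proof (exp_pos (- nu * c2)); nra).
  assert (P1 : exp (- mu * c1) * (w1 c1 - nu * w c1) < 0).
  { pose proof (exp_pos (- mu * c1)). nra. }
  assert (P2 : 0 < exp (- mu * c2) * (w1 c2 - nu * w c2)) by (apply Rmult_lt_0_compat; auto using exp_pos).
  assert (P : exp (- mu * c) * Lexpr mu nu w w1 w2 c * (c2 - c1) <= 0).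
  { assert (Lc := HL c ltac:(lra)). pose proof (exp_pos (- mu * c)).
    apply Rmult_le_0_r; [nra | lra]. }
  unfold phi in E. lra.
Qed.

Lemma Lop_factor l ls (u p q : R -> R) : (forall x, Lop ls u x = p x) ->
  (forall x, is_derive p x (l * p x + q x)) -> forall x, Lop (l :: ls) u x = q x.
Proof.
  intros Hp Hd x. change (Derive (Lop ls u) x - l * Lop ls u x = q x).
  rewrite (Derive_ext _ p _ Hp), (is_derive_unique _ _ _ (Hd x)), Hp. ring.
Qed.

Lemma Lop2_formula mu nu (u : R -> R) : (forall x, ex_derive u x) ->
  (forall x, ex_derive (Derive u) x) ->
  forall x, Lop (mu :: nu :: nil) u x = Lexpr mu nu u (Derive u) (Derive (Derive u)) x.
Proof.
  intros H1 H2. apply Lop_factor with (p := fun x => Derive u x - nu * u x); [reflexivity |].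
  intros x. eapply derive_value_eq.
  - apply derive_minus; [apply Derive_correct, H2 | apply is_derive_scal, Derive_correct, H1].
  - unfold Lexpr; ring.
Qed.

Lemma CkR_of_derivs m (f : R -> R) (d : nat -> R -> R) :
  (forall x, d 0%nat x = f x) ->
  (forall k x, (k < m)%nat -> is_derive (d k) x (d (S k) x)) ->
  (forall x, continuous (d m) x) -> CkR m f.
Proof.
  intros H0 Hd Hm.
  assert (E : forall k, (k <= m)%nat -> forall x, Derive_n f k x = d k x).
  { induction k as [| k IH]; intros Hk x; [symmetry; apply H0 |].
    change (Derive (Derive_n f k) x = d (S k) x).
    rewrite (Derive_ext _ (d k)) by (apply IH; lia). apply is_derive_unique, Hd; lia. }
  split.
  - intros k x Hk. apply ex_derive_ext with (d k); [intros; symmetry; apply E; lia |].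
    eexists; apply Hd; auto.
  - intros x. apply continuous_ext with (d m); [intros; symmetry; apply E; lia | apply Hm].
Qed.

Lemma CkR_two_derivs m (u : R -> R) : (2 <= m)%nat -> CkR m u ->
  (forall x, ex_derive u x) /\ (forall x, ex_derive (Derive u) x).
Proof.
  intros Hm [H _]. split; intros x; [exact (H 0%nat x ltac:(lia)) | exact (H 1%nat x ltac:(lia))].
Qed.

(* Omega through the first-order system O' = nu O + Q, Q' = mu Q - 1:
   then (D - nu) O = Q and (D - mu) Q = -1. *)
Lemma Omega_of_system A B mu nu (O Q : R -> R) :
  (forall x, is_derive O x (nu * O x + Q x)) -> (forall x, is_derive Q x (mu * Q x - 1)) ->
  O A = 0 -> O B = 0 -> Omega_spec A B mu nu O.
Proof.
  intros HO HQ HA HB.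
  set (d1 := fun x => nu * O x + Q x).
  set (d2 := fun x => nu * d1 x + (mu * Q x - 1)).
  set (d3 := fun x => nu * d2 x + mu * (mu * Q x - 1)).
  assert (HQ1 : forall x, is_derive (fun y => mu * Q y - 1) x (mu * (mu * Q x - 1) + 0)).
  { intros x. eapply derive_value_eq;
      [apply derive_minus; [apply is_derive_scal, HQ | apply derive_const] | ring]. }
  assert (Hd1 : forall x, is_derive d1 x (nu * d1 x + (mu * Q x - 1))).
  { intros x. eapply derive_value_eq;
      [apply derive_plus; [apply is_derive_scal, HO | apply HQ] | unfold d1; ring]. }
  assert (Hd2 : forall x, is_derive d2 x (d3 x)).
  { intros x. eapply derive_value_eq;
      [apply derive_plus; [apply is_derive_scal, Hd1 | apply HQ1] | unfold d3, d2; ring]. }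
  assert (Hd3 : forall x, ex_derive d3 x).
  { intros x. eexists. apply derive_plus; [apply is_derive_scal, Hd2 | apply is_derive_scal, HQ1]. }
  assert (L0 : forall x, Lop (0 :: nil) O x = d1 x).
  { apply Lop_factor with (p := O); [reflexivity |].
    intros x; eapply derive_value_eq; [apply HO | unfold d1; ring]. }
  assert (Lnu : forall x, Lop (nu :: nil) O x = Q x) by (apply Lop_factor with (p := O); [reflexivity | apply HO]).
  split; [split |].
  - apply CkR_of_derivs with
      (d := fun k => match k with 0%nat => O | 1%nat => d1 | 2%nat => d2 | _ => d3 end).
    + reflexivity.
    + intros [| [| [| k]]] x Hk; simpl in Hk; try lia; [apply HO | apply Hd1 | apply Hd2].
    + intros x. exact (ex_derive_continuous (K := R_AbsRing) (V := R_NormedModule) d3 x (Hd3 x)).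
  - apply Lop_factor with (p := fun x => mu * Q x - 1); [| apply HQ1].
    apply Lop_factor with (p := d1); [exact L0 | apply Hd1].
  - repeat split; auto. apply Lop_factor with (p := Q); [exact Lnu |].
    intros x; eapply derive_value_eq; [apply HQ | ring].
Qed.

(* exp_prim c is an antiderivative of x |-> e^{c x}, and exp_prim2 a b one
   of x |-> e^{a x} exp_prim b x; they give Omega in closed form. *)
Definition exp_prim (c x : R) : R := if Req_EM_T c 0 then x else (exp (c * x) - 1) / c.

Definition exp_prim2 (a b x : R) : R :=
  if Req_EM_T b 0 then (if Req_EM_T a 0 then x * x / 2 else (x * exp (a * x) - exp_prim a x) / a)
  else (exp_prim (a + b) x - exp_prim a x) / b.

Lemma exp_prim_derive c x : is_derive (exp_prim c) x (exp (c * x)).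
Proof.
  unfold exp_prim. destruct (Req_EM_T c 0) as [-> | Hc].
  - eapply derive_value_eq; [apply derive_id | rewrite Rmult_0_l, exp_0; auto].
  - auto_derive; auto. field; auto.
Qed.

Lemma exp_prim2_derive a b x : is_derive (exp_prim2 a b) x (exp (a * x) * exp_prim b x).
Proof.
  unfold exp_prim2. destruct (Req_EM_T b 0) as [-> | Hb].
  - unfold exp_prim at 2. destruct (Req_EM_T 0 0) as [_ |]; [| lra].
    destruct (Req_EM_T a 0) as [-> | Ha].
    + auto_derive; auto. rewrite Rmult_0_l, exp_0; field.
    + apply is_derive_ext with (fun y => / a * (y * exp (a * y) - exp_prim a y));
        [intros t; apply Rmult_comm |].
      eapply derive_value_eq.
      * apply is_derive_scal, derive_minus;
          [apply derive_mult; [apply derive_id | apply derive_exp_lin] | apply exp_prim_derive].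
      * cbv beta. field; auto.
  - apply is_derive_ext with (fun y => / b * (exp_prim (a + b) y - exp_prim a y));
      [intros t; apply Rmult_comm |].
    eapply derive_value_eq; [apply is_derive_scal, derive_minus; apply exp_prim_derive |].
    unfold exp_prim. destruct (Req_EM_T b 0); [lra |].
    replace ((a + b) * x) with (a * x + b * x) by ring. rewrite exp_plus. field; auto.
Qed.

Lemma exp_prim_neq c A B : A < B -> exp_prim c B - exp_prim c A <> 0.
Proof.
  intros HAB. unfold exp_prim. destruct (Req_EM_T c 0); [lra |]. intro H.
  assert (E : exp (c * B) = exp (c * A)).
  { apply (Rmult_eq_compat_l c) in H. field_simplify in H; auto. lra. }
  apply exp_inv, Rmult_eq_reg_l in E; auto. lra.
Qed.

(* Existence of Omega^{A,B}_{mu,nu,0}: Q = e^{mu x}(cc - exp_prim (-mu) x)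
   and O = e^{nu x}(G x - G A), with cc chosen so that O B = 0. *)
Lemma Omega_exists A B mu nu : A < B -> exists u, Omega_spec A B mu nu u.
Proof.
  intros Hab.
  set (dd := mu - nu).
  set (cc := (exp_prim2 dd (- mu) B - exp_prim2 dd (- mu) A) / (exp_prim dd B - exp_prim dd A)).
  set (G := fun x => cc * exp_prim dd x - exp_prim2 dd (- mu) x).
  exists (fun x => exp (nu * x) * (G x - G A)).
  apply Omega_of_system with (Q := fun x => exp (mu * x) * (cc - exp_prim (- mu) x)).
  - intros x. eapply derive_value_eq.
    + apply derive_mult; [apply derive_exp_lin |].
      apply derive_minus; [| apply derive_const].
      apply derive_minus; [apply is_derive_scal, exp_prim_derive | apply exp_prim2_derive].
    + assert (E : exp (mu * x) = exp (nu * x) * exp (dd * x))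
        by (rewrite <- exp_plus; f_equal; unfold dd; ring).
      cbv beta. rewrite E. ring.
  - intros x. eapply derive_value_eq.
    + apply derive_mult; [apply derive_exp_lin |].
      apply derive_minus; [apply derive_const | apply exp_prim_derive].
    + assert (E : exp (mu * x) * exp (- mu * x) = 1)
        by (rewrite <- exp_plus; replace (mu * x + - mu * x) with 0 by ring; apply exp_0).
      cbv beta. rewrite <- E. ring.
  - ring.
  - unfold G, cc. pose proof (exp_prim_neq dd A B Hab). field_simplify; auto. unfold Rdiv; ring.
Qed.

Lemma Omega_derivs A B mu nu (O : R -> R) : Omega_spec A B mu nu O ->
  (forall x, ex_derive O x) /\ (forall x, ex_derive (Derive O) x).
Proof. intros [[HC _] _]. exact (CkR_two_derivs 3 O ltac:(lia) HC). Qed.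

(* Apply the maximum principle to
   K Omega - w and K Omega + w, whose L-values are -K -+ L w <= 0. *)
Lemma bound_by_Omega a b mu nu (O w w1 w2 : R -> R) K : a < b -> Omega_spec a b mu nu O ->
  cont_on a b w -> w a = 0 -> w b = 0 ->
  (forall x, a < x < b -> is_derive w x (w1 x)) ->
  (forall x, a < x < b -> is_derive w1 x (w2 x)) ->
  (forall x, a < x < b -> Rabs (Lexpr mu nu w w1 w2 x) <= K) ->
  forall x, a <= x <= b -> Rabs (w x) <= K * O x.
Proof.
  intros Hab HO Hc Ha Hb Hw Hw1 HK x Hx.
  destruct (Omega_derivs _ _ _ _ _ HO) as [DO1 DO2].
  assert (LO := Lop2_formula mu nu O DO1 DO2).
  destruct HO as [_ [HOa [HOb HOL]]].
  assert (Hsigned : forall s, s = 1 \/ s = -1 -> 0 <= K * O x - s * w x).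
  { intros s Hs.
    apply (max_principle a b mu nu (fun y => K * O y - s * w y)
      (fun y => K * Derive O y - s * w1 y) (fun y => K * Derive (Derive O) y - s * w2 y)); auto.
    - apply cont_on_minus; [lra | | apply cont_on_scal; [lra | exact Hc]].
      apply cont_on_of_continuity_pt; intros y _.
      apply (continuity_pt_scal O K). eapply derive_cont, Derive_correct, DO1.
    - rewrite HOa, Ha; ring.
    - rewrite HOb, Hb; ring.
    - intros y Hy. apply derive_minus; apply is_derive_scal; [apply Derive_correct, DO1 | auto].
    - intros y Hy. apply derive_minus; apply is_derive_scal; [apply Derive_correct, DO2 | auto].
    - intros y Hy.
      replace (Lexpr mu nu _ _ _ y)
        with (K * Lexpr mu nu O (Derive O) (Derive (Derive O)) y - s * Lexpr mu nu w w1 w2 y)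
        by (unfold Lexpr; ring).
      rewrite <- LO, HOL. specialize (HK y Hy). apply Rabs_le_between in HK.
      destruct Hs as [-> | ->]; lra. }
  pose proof (Hsigned 1 (or_introl eq_refl)). pose proof (Hsigned (-1) (or_intror eq_refl)).
  apply Rabs_le. lra.
Qed.

(* Omega^{a,b}_{mu,nu,0} is unique on [a,b] (comparison with K = 0). *)
Lemma Omega_unique a b mu nu (u O : R -> R) : a < b ->
  Omega_spec a b mu nu u -> Omega_spec a b mu nu O -> forall x, a <= x <= b -> u x = O x.
Proof.
  intros Hab Hu HO x Hx.
  destruct (Omega_derivs _ _ _ _ _ Hu) as [Du1 Du2].
  assert (Lu := Lop2_formula mu nu u Du1 Du2). assert (HOspec := HO).
  destruct (Omega_derivs _ _ _ _ _ HO) as [DO1 DO2].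
  assert (LO := Lop2_formula mu nu O DO1 DO2).
  destruct Hu as [_ [Hua [Hub HuL]]]. destruct HO as [_ [HOa [HOb HOL]]].
  assert (H := bound_by_Omega a b mu nu O (fun y => u y - O y) (fun y => Derive u y - Derive O y)
    (fun y => Derive (Derive u) y - Derive (Derive O) y) 0 Hab HOspec).
  assert (Hw : Rabs (u x - O x) <= 0 * O x).
  { apply H; auto.
    - apply cont_on_of_continuity_pt; intros y _. eapply derive_cont.
      apply derive_minus; apply Derive_correct; auto.
    - rewrite Hua, HOa; ring.
    - rewrite Hub, HOb; ring.
    - intros y _. apply derive_minus; apply Derive_correct; auto.
    - intros y _. apply derive_minus; apply Derive_correct; auto.
    - intros y _.
      replace (Lexpr mu nu _ _ _ y)
        with (Lexpr mu nu u (Derive u) (Derive (Derive u)) y - Lexpr mu nu O (Derive O) (Derive (Derive O)) y)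
        by (unfold Lexpr; ring).
      rewrite <- Lu, <- LO, HuL, HOL, Rminus_eq_0, Rabs_R0. lra. }
  rewrite Rmult_0_l in Hw. pose proof (Rabs_pos (u x - O x)).
  assert (Rabs (u x - O x) = 0) by lra. apply Rabs_eq_0 in H1. lra.
Qed.

Lemma real_Lub_ge (E : R -> Prop) y bound : E y -> (forall z, E z -> z <= bound) ->
  y <= real (Lub_Rbar E).
Proof.
  intros Hy Hb. destruct (Lub_Rbar_correct E) as [ub lub].
  assert (Hle : Rbar_le (Lub_Rbar E) bound) by (apply lub; intros z Hz; apply Hb; auto).
  specialize (ub y Hy). destruct (Lub_Rbar E); simpl in *; auto; contradiction.
Qed.

Lemma real_Lub_le (E : R -> Prop) bound : (forall z, E z -> z <= bound) -> 0 <= bound ->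
  real (Lub_Rbar E) <= bound.
Proof.
  intros Hb H0. destruct (Lub_Rbar_correct E) as [_ lub].
  assert (Hle : Rbar_le (Lub_Rbar E) bound) by (apply lub; intros z Hz; apply Hb; auto).
  destruct (Lub_Rbar E); simpl in *; auto; contradiction.
Qed.

(* A function continuous on [a,b] attains its supremum, so its values are
   bounded by sup_on. *)
Lemma sup_on_ge a b F t : a <= b -> cont_on a b F -> a <= t <= b -> F t <= sup_on a b F.
Proof.
  intros Hab Hc Ht.
  destruct (continuity_ab_maj (fun y => F (clamp a b y)) a b Hab) as [xm [Hmax _]].
  { intros; now apply cont_on_clamp. }
  unfold sup_on. apply real_Lub_ge with (F (clamp a b xm)); [exists t; split; auto |].
  intros z [s [Hs ->]]. rewrite <- (clamp_id a b s) by auto. apply Hmax; auto.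
Qed.

Lemma sup_on_abs_nonneg a b (F : R -> R) : a <= b -> cont_on a b (fun x => Rabs (F x)) ->
  0 <= sup_on a b (fun x => Rabs (F x)).
Proof.
  intros Hab Hc. eapply Rle_trans; [apply (Rabs_pos (F a)) |].
  apply (sup_on_ge a b (fun x => Rabs (F x))); auto; lra.
Qed.

(* M^{a,b}_{mu,nu} bounds |Omega| on [a,b] (the supremum is over the single
   function Omega, which is continuous). *)
Lemma Mconst_ge a b mu nu (u : R -> R) t : a < b -> Omega_spec a b mu nu u -> a <= t <= b ->
  Rabs (u t) <= Mconst a b mu nu.
Proof.
  intros Hab Hu Ht. destruct (Omega_exists a b mu nu Hab) as [O HO].
  destruct (continuity_ab_maj (fun s => Rabs (O s)) a b ltac:(lra)) as [xm [Hmax _]].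
  { intros c _. apply (continuity_pt_comp O Rabs); [| apply Rcontinuity_abs].
    eapply derive_cont, Derive_correct, (proj1 (Omega_derivs _ _ _ _ _ HO)). }
  unfold Mconst. apply real_Lub_ge with (Rabs (O xm)); [exists u; split; auto; exists t; auto |].
  intros z [v [Hv [s [Hs ->]]]]. rewrite (Omega_unique a b mu nu v O); auto.
Qed.

Lemma Mconst_nonneg a b mu nu : a < b -> 0 <= Mconst a b mu nu.
Proof.
  intros Hab. destruct (Omega_exists a b mu nu Hab) as [O HO].
  eapply Rle_trans; [apply (Rabs_pos (O a)) | apply (Mconst_ge a b mu nu O a); auto; lra].
Qed.

Lemma local_estimate a b mu nu (f f1 f2 h : R -> R) : a < b -> C2_on a b f f1 f2 ->
  inE (mu :: nu :: nil) h -> f a = h a -> f b = h b -> forall x, a <= x <= b ->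
  Rabs (f x - h x) <= Mconst a b mu nu * sup_on a b (fun th => Rabs (Lexpr mu nu f f1 f2 th)).
Proof.
  intros Hab HC2 [HCh HLh] Ha Hb x Hx.
  destruct (CkR_two_derivs 2 h (le_n 2) HCh) as [Dh1 Dh2].
  assert (Lh := Lop2_formula mu nu h Dh1 Dh2).
  destruct (Omega_exists a b mu nu Hab) as [O HO].
  set (K := sup_on a b (fun th => Rabs (Lexpr mu nu f f1 f2 th))).
  assert (HK0 : 0 <= K) by (apply sup_on_abs_nonneg; [lra | apply Lexpr_cont_on; auto; lra]).
  destruct HC2 as [Hf [Hf1 Hf2]].
  assert (Hw : Rabs (f x - h x) <= K * O x).
  { apply (bound_by_Omega a b mu nu O (fun y => f y - h y) (fun y => f1 y - Derive h y)
      (fun y => f2 y - Derive (Derive h) y) K Hab HO); auto.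
    - apply cont_on_minus; [lra | eapply deriv_on_cont; eauto |].
      apply cont_on_of_continuity_pt; intros y _. eapply derive_cont, Derive_correct, Dh1.
    - rewrite Ha; ring.
    - rewrite Hb; ring.
    - intros y Hy. apply derive_minus; [eapply deriv_on_is_derive; eauto | apply Derive_correct, Dh1].
    - intros y Hy. apply derive_minus; [eapply deriv_on_is_derive; eauto | apply Derive_correct, Dh2].
    - intros y Hy.
      replace (Lexpr mu nu _ _ _ y)
        with (Lexpr mu nu f f1 f2 y - Lexpr mu nu h (Derive h) (Derive (Derive h)) y)
        by (unfold Lexpr; ring).
      rewrite <- Lh, HLh, Rminus_0_r.
      apply (sup_on_ge a b (fun th => Rabs (Lexpr mu nu f f1 f2 th))); [lra | | lra].
      apply Lexpr_cont_on; [lra | repeat split; auto]. }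
  assert (HM := Mconst_ge a b mu nu O x Hab HO Hx).
  eapply Rle_trans; [exact Hw |]. rewrite (Rmult_comm (Mconst a b mu nu)).
  apply Rmult_le_compat_l; auto.
  eapply Rle_trans; [apply RRle_abs | exact HM].
Qed.

Lemma nodes_le n (t : nat -> R) : (forall j, (1 <= j < n)%nat -> t j < t (S j)) ->
  forall i j, (1 <= i)%nat -> (i <= j <= n)%nat -> t i <= t j.
Proof.
  intros Ht i j Hi Hij. induction j as [| j IH]; [lia |].
  destruct (Nat.eq_dec i (S j)) as [-> | Hne]; [lra |].
  specialize (IH ltac:(lia)). specialize (Ht j ltac:(lia)). lra.
Qed.

Lemma node_interval n (t : nat -> R) x : (forall j, (1 <= j < n)%nat -> t j < t (S j)) ->
  (2 <= n)%nat -> t 1%nat <= x <= t n -> exists j, (1 <= j < n)%nat /\ t j <= x <= t (S j).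
Proof.
  intros Ht. induction n as [| m IH]; intros Hn Hx; [lia |].
  destruct (Nat.eq_dec m 1) as [-> | Hm]; [exists 1%nat; split; [lia | auto] |].
  destruct (Rle_dec x (t m)) as [Hxm | Hxm].
  - destruct IH as [j [Hj Hxj]]; [intros j Hj; apply Ht; lia | lia | lra |].
    exists j; split; [lia | auto].
  - exists m; split; [lia | lra].
Qed.

Lemma maxj_ge n (F : nat -> R) j : (1 <= j < n)%nat -> F j <= maxj n F.
Proof.
  intros Hj. unfold maxj.
  assert (Hin : In (F j) (map F (seq 1 (n - 1)))) by (apply in_map, in_seq; lia).
  induction (map F (seq 1 (n - 1))) as [| y l IH]; [contradiction |].
  destruct Hin as [-> | Hin]; simpl; [apply Rmax_l | eapply Rle_trans; [apply IH; auto | apply Rmax_r]].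
Qed.

Lemma sup_on_piecewise n (t : nat -> R) (F : R -> R) (A B : nat -> R) : (2 <= n)%nat ->
  (forall j, (1 <= j < n)%nat -> t j < t (S j)) ->
  (forall j, (1 <= j < n)%nat -> 0 <= A j /\ 0 <= B j) ->
  (forall j x, (1 <= j < n)%nat -> t j <= x <= t (S j) -> F x <= A j * B j) ->
  sup_on (t 1%nat) (t n) F <= maxj n A * maxj n B.
Proof.
  intros Hn Ht Hpos Hloc.
  destruct (Hpos 1%nat ltac:(lia)) as [HA1 HB1].
  assert (HA := maxj_ge n A 1%nat ltac:(lia)). assert (HB := maxj_ge n B 1%nat ltac:(lia)).
  unfold sup_on. apply real_Lub_le; [| apply Rmult_le_pos; lra].
  intros z [x [Hx ->]]. destruct (node_interval n t x Ht Hn Hx) as [j [Hj Hxj]].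
  destruct (Hpos j Hj) as [HAj HBj].
  eapply Rle_trans; [apply Hloc; eauto |].
  apply Rmult_le_compat; auto; apply maxj_ge; auto.
Qed.

Theorem mainTheorem8 (n : nat) (t lam0 lam1 : nat -> R) (f f1 f2 g : R -> R) :
  (2 <= n)%nat ->
  (forall j, (1 <= j < n)%nat -> t j < t (S j)) ->
  (forall j, (1 <= j < n)%nat -> lam0 j <= lam1 j) ->
  deriv_on (t 1%nat) (t n) f f1 ->
  deriv_on (t 1%nat) (t n) f1 f2 ->
  cont_on (t 1%nat) (t n) f2 ->
  cont_on (t 1%nat) (t n) g ->
  (forall j, (1 <= j < n)%nat -> exists h, inE (lam0 j :: lam1 j :: nil) h /\
      forall x, t j <= x <= t (S j) -> g x = h x) ->
  (forall j, (1 <= j <= n)%nat -> g (t j) = f (t j)) ->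
  sup_on (t 1%nat) (t n) (fun x => Rabs (f x - g x)) <=
    maxj n (fun j => Mconst (t j) (t (S j)) (lam0 j) (lam1 j)) *
    maxj n (fun j => sup_on (t j) (t (S j))
        (fun th => Rabs (f2 th - (lam0 j + lam1 j) * f1 th + lam0 j * lam1 j * f th))).
Proof.
  intros Hn Ht _ Hf Hf1 Hf2 _ Hg Hgf.
  assert (Hloc : forall j, (1 <= j < n)%nat -> C2_on (t j) (t (S j)) f f1 f2).
  { intros j Hj. apply (C2_on_sub (t 1%nat) (t n)); [apply (nodes_le n); auto; lia ..|].
    repeat split; auto. }
  apply sup_on_piecewise; auto.
  - intros j Hj. specialize (Ht j Hj). split; [apply Mconst_nonneg; auto |].
    apply (sup_on_abs_nonneg _ _ (Lexpr (lam0 j) (lam1 j) f f1 f2)); [lra |].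
    apply Lexpr_cont_on; auto; lra.
  - intros j x Hj Hx. destruct (Hg j Hj) as [h [Hh Hgh]].
    specialize (Ht j Hj). rewrite (Hgh x Hx).
    apply (local_estimate _ _ _ _ f f1 f2 h); auto.
    + rewrite <- Hgh, Hgf; auto; lia || lra.
    + rewrite <- Hgh, Hgf; auto; lia || lra.
Qed.
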